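(* Let $1/4\le\beta<1/3$ and let $G$ be a graph of order $n$ with minimum degree $(1-\beta)n$. Then $$(1+3\beta)k_3+\frac{2}{1-2\beta}\left(1-3\beta+\frac{4\beta-1}{29-75\beta}\right)\sum_{T\in\mathcal{K}_3}D_+(T)\ \ge\ 2(1-2\beta)\beta n k_2+\frac{4k_4}{n}.$$ Moreover, if equality holds, then $G$ is $(1-\beta)n$-regular and every edge $e$ satisfies $D(e)=1-2\beta$ or $D(e)=2\beta$.
   Context: All graphs are finite and simple. For a graph $G$, $\mathcal{K}_t$ is the set of $t$-cliques and $k_t=|\mathcal{K}_t|$. The degree $d(T)$ of a clique $T$ is the number of cliques with one more vertex containing $T$, and $D(T)=d(T)/n$. Here $p=\lceil\beta^{-1}\rceil-1=3$. For $T\in\mathcal{K}_t$, $1\le t\le 4$, $D_-(T)=\min\{D(T),(4-t)\beta\}$ and $D_+(T)=D(T)-D_-(T)$. *)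

From HB Require Import structures.
From mathcomp Require Import all_boot all_order all_algebra.
Set Implicit Arguments. Unset Strict Implicit. Unset Printing Implicit Defensive.
Import Order.TTheory GRing.Theory Num.Theory.

(* A finite simple graph: vertex type V : finType, adjacency e : rel V,
   assumed symmetric and irreflexive in the theorem. *)
Section Graph.
Variables (V : finType) (e : rel V).

Definition is_clique (S : {set V}) : bool :=
  [forall x in S, forall y in S, (x != y) ==> e x y].

Definition cliques (t : nat) : {set {set V}} :=
  [set S : {set V} | is_clique S && (#|S| == t)].

Definition kcount (t : nat) : nat := #|cliques t|.

Definition vdeg (x : V) : nat := #|[set y | e x y]|.

Definition cdeg (T : {set V}) : nat :=
  #|[set S in cliques (#|T|.+1) | T \subset S]|.

Local Open Scope ring_scope.
Variable R : realFieldType.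

Definition Dn (T : {set V}) : R := (cdeg T)%:R / (#|V|%:R).

Definition Dminus (beta : R) (T : {set V}) : R :=
  Num.min (Dn T) ((4 - #|T|)%:R * beta).

Definition Dplus (beta : R) (T : {set V}) : R := Dn T - Dminus beta T.

End Graph.

From mathcomp Require Import all_boot all_order all_algebra.
From mathcomp Require Import ring lra zify.
Import Order.TTheory GRing.Theory Num.Theory.

Set Implicit Arguments. Unset Strict Implicit. Unset Printing Implicit Defensive.

(* Counting each 4-clique through its four triangles and each edge through its [d(e)]
   triangles gives [sum_T D(T) = 4 k_4 / n] and [sum_T sum_(e in T) 1 / D(e) = n k_2], so
   lhs - rhs is a sum over triangles of
     [1 + 3b + c D_+(T) - D(T) - 2 (1 - 2b) b (1/D(e1) + 1/D(e2) + 1/D(e3))].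
   Each summand is a function of the local densities, which satisfy [D(v) >= 1 - b],
   [D(uv) >= D(u) + D(v) - 1] and, by inclusion-exclusion,
   [D(T) <= sum D(e) - sum D(v) + 1].  Under these constraints the summand is nonnegative:
   convexity of [1/x] reduces it to two edge densities, and the resulting bound is concave in
   each variable on the relevant intervals, so it suffices to check it at explicit endpoints.
   Equality forces every summand to vanish, which pins down all degrees and codegrees since
   every edge lies in a triangle. *)

Lemma cards_incl_excl3 (T : finType) (A B C : {set T}) :
  #|A :|: B :|: C| + #|A :&: B| + #|A :&: C| + #|B :&: C|
  = #|A| + #|B| + #|C| + #|A :&: B :&: C|.
Proof.
have -> : A :&: B :&: C = (A :&: C) :&: (B :&: C) by rewrite setIACA setIid.
have := cardsUI A B; have := cardsUI (A :|: B) C; have := cardsUI (A :&: C) (B :&: C).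
rewrite setIUl; lia.
Qed.

Section Cliques.
Variables (V : finType) (e : rel V).
Hypotheses (esym : symmetric e) (eirr : irreflexive e).

Definition nbhd (x : V) : {set V} := [set y | e x y].

Lemma cliqueP (S : {set V}) :
  reflect {in S &, forall x y, x != y -> e x y} (is_clique e S).
Proof.
apply: (iffP forallP) => [h x y xS yS|h x].
  by move: (h x) => /implyP/(_ xS)/forallP/(_ y)/implyP/(_ yS)/implyP.
by apply/implyP => xS; apply/forallP => y; apply/implyP => yS; apply/implyP; apply: h.
Qed.

Lemma sub_clique (S T : {set V}) : T \subset S -> is_clique e S -> is_clique e T.
Proof. by move=> /subsetP TS /cliqueP cS; apply/cliqueP => x y /TS xS /TS; apply: cS. Qed.

Lemma cdeg_common_nbhd (T : {set V}) : is_clique e T ->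
  cdeg e T = #|[set v | [forall x in T, e x v]]|.
Proof.
move=> cT; rewrite /cdeg; set C := [set v | [forall x in T, e x v]].
have notT v : v \in C -> v \notin T.
  by rewrite inE => /forallP/(_ v); apply: contraTN => ->; rewrite eirr.
suff -> : [set S in cliques e #|T|.+1 | T \subset S] = (fun v => v |: T) @: C.
  rewrite card_in_imset // => v w vC wC hvw.
  have : v \in w |: T by rewrite -hvw setU11.
  by rewrite in_setU (negbTE (notT v vC)) orbF => /set1P.
apply/setP => S; rewrite !inE; apply/idP/imsetP.
- case/andP => /andP [cS /eqP cardS] TS.
  have : #|S :\: T| == 1 by rewrite cardsD (setIidPr TS) cardS subSnn.
  case/cards1P => v hv.
  have : v \in S :\: T by rewrite hv set11.
  rewrite !inE => /andP [vT vS].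
  exists v.
    rewrite inE; apply/forallP => x; apply/implyP => xT.
    apply: (cliqueP _ cS) => //; first exact: (subsetP TS).
    by apply: contraNneq vT => <-.
  apply/setP => x; rewrite !inE; case: (boolP (x \in T)) => xT; first by rewrite orbT (subsetP TS).
  by rewrite orbF -in_set1 -hv !inE xT.
- case=> v vC ->; have vT := notT v vC.
  move: vC; rewrite inE => /forallP hv.
  rewrite cardsU1 vT subsetUr add1n eqxx !andbT.
  apply/cliqueP => x y; rewrite !inE => /orP[/eqP->|xT] /orP[/eqP->|yT]; rewrite ?eqxx //.
  + by rewrite esym; move: (hv y); rewrite yT.
  + by move: (hv x); rewrite xT.
  + by move/cliqueP: cT; apply.
Qed.

Lemma edge_neq x y : e x y -> x != y.
Proof. by apply: contraTneq => ->; rewrite eirr. Qed.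

Lemma cliques2P E :
  reflect (exists a b, e a b /\ E = [set a; b]) (E \in cliques e 2).
Proof.
apply: (iffP idP) => [|[a [b [eab ->]]]].
  rewrite inE => /andP [cE /cards2P [a [b [ab hE]]]].
  by exists a, b; split=> //; move/cliqueP: cE; apply; rewrite // hE !inE eqxx ?orbT.
rewrite inE cards2 edge_neq // andbT.
apply/cliqueP => x y; rewrite !inE => /orP[]/eqP-> /orP[]/eqP->; rewrite ?eqxx //.
by rewrite esym.
Qed.

Lemma cliques3P T :
  reflect (exists a b c, [/\ e a b, e a c, e b c & T = [set a; b; c]]) (T \in cliques e 3).
Proof.
apply: (iffP idP) => [|[a [b [c [eab eac ebc ->]]]]].
  rewrite inE => /andP [cT /eqP cardT].
  have /card_gt0P [a aT] : (0 < #|T|)%N by rewrite cardT.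
  have : #|T :\ a| == 2 by rewrite (cardsD1 a T) aT add1n in cardT; case: cardT => ->.
  case/cards2P => b [c [bc hT]].
  have /setD1P [ba bT] : b \in T :\ a by rewrite hT !inE eqxx.
  have /setD1P [ca cT'] : c \in T :\ a by rewrite hT !inE eqxx orbT.
  move/cliqueP: cT => cT.
  exists a, b, c; split; rewrite 1?cT // 1?eq_sym //.
  by rewrite -(setD1K aT) hT; apply/setP => x; rewrite !inE orbA.
have ab := edge_neq eab; have ac := edge_neq eac; have bc := edge_neq ebc.
rewrite inE -setUA cardsU1 cards2 bc !inE negb_or ab ac /= andbT.
apply/cliqueP => x y; rewrite !inE => /or3P[]/eqP-> /or3P[]/eqP->;
  rewrite ?eqxx // => _; by [|rewrite esym].
Qed.

Lemma cliques_clique t S : S \in cliques e t -> is_clique e S.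
Proof. by rewrite inE => /andP []. Qed.

Lemma cdeg_edge a b : e a b -> cdeg e [set a; b] = #|nbhd a :&: nbhd b|.
Proof.
move=> eab; rewrite cdeg_common_nbhd; last first.
  by apply: (@cliques_clique 2); apply/cliques2P; exists a, b.
apply: eq_card => v; rewrite !inE; apply/forallP/andP => [h|[ha hb] x].
  by split; [move: (h a) | move: (h b)]; rewrite !inE eqxx ?orbT.
by rewrite !inE; apply/implyP => /orP[]/eqP->.
Qed.

Lemma cdeg_triangle a b c : e a b -> e a c -> e b c ->
  cdeg e [set a; b; c] = #|nbhd a :&: nbhd b :&: nbhd c|.
Proof.
move=> eab eac ebc; rewrite cdeg_common_nbhd; last first.
  by apply: (@cliques_clique 3); apply/cliques3P; exists a, b, c.
apply: eq_card => v; rewrite !inE; apply/forallP/andP => [h|[/andP[ha hb] hc] x].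
  by split; [apply/andP; split; [move: (h a) | move: (h b)] | move: (h c)]; rewrite !inE eqxx ?orbT.
by rewrite !inE; apply/implyP => /orP[/orP[]|]/eqP->.
Qed.

Lemma triangle_edges a b c : e a b -> e a c -> e b c -> forall E,
  (E \in cliques e 2) && (E \subset [set a; b; c])
  = (E \in [set a; b] |: ([set a; c] |: [set [set b; c]])).
Proof.
move=> eab eac ebc E; apply/andP/idP => [[/cliques2P [x [y [exy ->]]] sub]|].
  have := subsetP sub x; have := subsetP sub y; rewrite !inE !eqxx ?orbT.
  have sw : [set y; x] = [set x; y] by rewrite setUC.
  move: (edge_neq exy) sw => nxy sw.
  by move=> /(_ isT) /orP[/orP[]|]/eqP ey /(_ isT) /orP[/orP[]|]/eqP ex;
    move: nxy sw; rewrite ex ey ?eqxx //= => _ sw; rewrite -?sw ?eqxx ?orbT.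
move=> /setU1P[->|/setU1P[->|/set1P->]];
  (split; first by apply/cliques2P; do 2 eexists; split; last reflexivity);
  by apply/subsetP => z; rewrite !inE => /orP[]/eqP->; rewrite !eqxx ?orbT.
Qed.

Lemma triangle_edge_sum (M : nmodType) (F : {set V} -> M) a b c :
  e a b -> e a c -> e b c ->
  (\sum_(E in cliques e 2 | E \subset [set a; b; c]) F E
   = F [set a; b] + F [set a; c] + F [set b; c])%R.
Proof.
move=> eab eac ebc; rewrite (eq_bigl _ _ (triangle_edges eab eac ebc)).
have ab := edge_neq eab; have ac := edge_neq eac; have bc := edge_neq ebc.
have ab_ac : [set a; b] != [set a; c].
  by apply/eqP => /setP/(_ c); rewrite !inE eqxx orbT !(eq_sym c) (negbTE ac) (negbTE bc).
have ab_bc : [set a; b] != [set b; c].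
  by apply/eqP => /setP/(_ a); rewrite !inE eqxx (negbTE ab) (negbTE ac).
have ac_bc : [set a; c] != [set b; c].
  by apply/eqP => /setP/(_ a); rewrite !inE eqxx (negbTE ab) (negbTE ac).
rewrite big_setU1 /=; last by rewrite !inE negb_or ab_ac ab_bc.
by rewrite big_setU1 /= ?big_set1 ?addrA // inE ac_bc.
Qed.

Lemma sum_subcliques (M : nmodType) (t : nat) (F : {set V} -> M) :
  (\sum_(S in cliques e t.+1) \sum_(T in cliques e t | T \subset S) F T
   = \sum_(T in cliques e t) F T *+ cdeg e T)%R.
Proof.
under eq_bigr => S _ do rewrite big_mkcondr.
rewrite exchange_big; apply: eq_bigr => T; rewrite inE => /andP [_ /eqP tT].
by rewrite -big_mkcondr /cdeg tT -sumr_const; apply: eq_bigl => S; rewrite inE.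
Qed.

Lemma triangles_of_4clique S : S \in cliques e 4 -> #|[set T in cliques e 3 | T \subset S]| = 4.
Proof.
rewrite inE => /andP [cS /eqP cardS].
rewrite -[4]/('C(4, 3)) -cardS -cards_draws; apply: eq_card => T; rewrite !inE.
by apply/andP/andP => [[/andP [_ ->] ->] | [TS ->]] //; rewrite (sub_clique TS cS).
Qed.

Lemma sum_cdeg_triangles (R : pzSemiRingType) :
  (\sum_(T in cliques e 3) (cdeg e T)%:R = (4 * kcount e 4)%:R :> R)%R.
Proof.
rewrite -(sum_subcliques 3 (fun=> 1%R)) /kcount natrM mulr_natr -sumr_const.
apply: eq_bigr => S /triangles_of_4clique <-.
by rewrite -sumr_const; apply: eq_bigl => T; rewrite inE.
Qed.

End Cliques.

Local Open Scope ring_scope.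

Ltac field_lra := field; do ?[apply/andP; split]; lra.

Section Hyperbolic.
Variable R : realFieldType.

Definition hyperb (a l K1 K2 w x : R) : R := a + l * x - K1 / x - K2 / (w - x).

Lemma hyperb_chord (a l K1 K2 w p q u : R) :
  p != 0 -> q != 0 -> u != 0 -> w - p != 0 -> w - q != 0 -> w - u != 0 ->
  (q - p) * hyperb a l K1 K2 w u
  = (q - u) * hyperb a l K1 K2 w p + (u - p) * hyperb a l K1 K2 w q
    + K1 * ((q - u) * (u - p) * (q - p) / (p * q * u))
    + K2 * ((q - u) * (u - p) * (q - p) / ((w - p) * (w - q) * (w - u))).
Proof. by move=> *; rewrite /hyperb; field; do ?[apply/andP; split]. Qed.

(* For [K1, K2 >= 0] the function is concave on [(0, w)], so a chord lies below it. *)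
Lemma hyperb_ge0_between (a l K1 K2 w p q u : R) :
  0 < p -> p <= u -> u <= q -> q < w -> 0 <= K1 -> 0 <= K2 ->
  0 <= hyperb a l K1 K2 w p -> 0 <= hyperb a l K1 K2 w q -> 0 <= hyperb a l K1 K2 w u.
Proof.
move=> p0 pu uq qw K10 K20 hp hq.
have [pq|qp] := ltrP p q; last by have -> : u = p by apply/le_anti; rewrite pu (le_trans uq).
rewrite -(pmulr_rge0 _ (_ : 0 < q - p)); last by rewrite subr_gt0.
rewrite hyperb_chord; try lra.
have num : 0 <= (q - u) * (u - p) * (q - p) by rewrite !mulr_ge0 //; lra.
have den1 : 0 < p * q * u by rewrite !mulr_gt0 //; lra.
have den2 : 0 < (w - p) * (w - q) * (w - u) by rewrite !mulr_gt0 //; lra.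
have t1 : 0 <= (q - u) * hyperb a l K1 K2 w p by rewrite mulr_ge0 // subr_ge0.
have t2 : 0 <= (u - p) * hyperb a l K1 K2 w q by rewrite mulr_ge0 // subr_ge0.
by rewrite !addr_ge0 // mulr_ge0 // divr_ge0 // ltW.
Qed.

Lemma ler_wpdiv2l (K x y : R) : 0 <= K -> 0 < x -> x <= y -> K / y <= K / x.
Proof. by move=> K0 x0 xy; rewrite ler_wpM2l // lef_pV2 // posrE (lt_le_trans x0 xy). Qed.

Lemma recip_sum3E (x1 x2 x3 : R) : x1 != 0 -> x2 != 0 -> x3 != 0 -> x2 + x3 - x1 != 0 ->
  1 / x1 + 1 / x2 + 1 / x3 = 1 / x1 + 1 / x1 + 1 / (x2 + x3 - x1)
    - (x2 - x1) * (x3 - x1) * (x2 + x3) / (x1 * (x2 + x3 - x1) * x2 * x3).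
Proof. by move=> *; field; do ?[apply/andP; split]. Qed.

End Hyperbolic.

(* The contribution of a triangle [T] with [a = D(T)] and edge densities [x1, x2, x3]; [c] is
   the coefficient of [D_+] in the theorem. *)
Definition triangle_excess (R : realFieldType) (b c a x1 x2 x3 : R) : R :=
  1 + 3 * b + c * (a - Num.min a b) - a - 2 * (1 - 2 * b) * b * (1 / x1 + 1 / x2 + 1 / x3).

Lemma triangle_excessC12 (R : realFieldType) (b c a x1 x2 x3 : R) :
  triangle_excess b c a x1 x2 x3 = triangle_excess b c a x2 x1 x3.
Proof. by rewrite /triangle_excess (addrC (1 / x1)). Qed.

Lemma triangle_excessC13 (R : realFieldType) (b c a x1 x2 x3 : R) :
  triangle_excess b c a x1 x2 x3 = triangle_excess b c a x3 x2 x1.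
Proof. by rewrite /triangle_excess; congr (_ - _ * _); ring. Qed.

Definition extreme (R : realFieldType) (b x : R) : Prop := x = 1 - 2 * b \/ x = 2 * b.

Section Excess.
Variables (R : realFieldType) (b : R).
Hypotheses (b_ge : 1 / 4 <= b) (b_lt : b < 1 / 3).

(* [lra] ignores section hypotheses, so proofs first push the bounds on [b] into the goal. *)
Ltac bounds := move: b_ge b_lt => ? ?.

Local Notation Kb := (2 * (1 - 2 * b) * b).
Local Notation kb := ((1 - 2 * b) / (1 - b)).
Local Notation wb := (2 - 3 * b).
Local Notation qb := ((2 - 3 * b) / 2).
(* The common value at [qb] of the three profiles below. *)
Local Notation Vq := (b * (3 + (4 * b - 1) * (19 - 12 * b)) / (16 * (1 - b) * (2 - 3 * b))).

Lemma Vq_ge0 : 0 <= Vq.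
Proof.
bounds.
have h : 0 <= (4 * b - 1) * (19 - 12 * b) by rewrite mulr_ge0 //; lra.
apply: divr_ge0; first by rewrite mulr_ge0 //; lra.
by rewrite !mulr_ge0 //; lra.
Qed.

Local Notation F1 := (hyperb (1 + 2 * b + kb * b) (- kb) (2 * Kb) Kb wb).
Local Notation F2 := (hyperb (1 + 2 * b + kb * b) (- kb) (3 * Kb) 0 wb).
Local Notation F3 := (hyperb (1 + 2 * b + kb * (2 - 2 * b)) (- (3 * kb)) (3 * Kb) 0 wb).

Lemma F1_ge0 (u : R) : 1 - 2 * b <= u -> u <= qb -> 0 <= F1 u.
Proof.
bounds; move=> mu uq; apply: (@hyperb_ge0_between _ _ _ _ _ _ (1 - 2 * b) qb) => //; try nra.
- by have -> : F1 (1 - 2 * b) = 0 by rewrite /hyperb; field_lra.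
- have -> : F1 qb = Vq by rewrite /hyperb; field_lra.
  exact: Vq_ge0.
Qed.

Lemma F2_ge0 (u : R) : qb <= u -> u <= 1 -> 0 <= F2 u.
Proof.
bounds; move=> qu u1; apply: (@hyperb_ge0_between _ _ _ _ _ _ qb 1) => //; try nra.
- have -> : F2 qb = Vq by rewrite /hyperb; field_lra.
  exact: Vq_ge0.
- have -> : F2 1 = 2 * b * (6 * b - 1) by rewrite /hyperb; field_lra.
  by rewrite mulr_ge0 //; lra.
Qed.

Lemma F3_ge0 (u : R) : (2 - 2 * b) / 3 <= u -> u <= qb -> 0 <= F3 u.
Proof.
bounds; move=> pu uq; apply: (@hyperb_ge0_between _ _ _ _ _ _ ((2 - 2 * b) / 3) qb) => //; try nra.
- have -> : F3 ((2 - 2 * b) / 3) = (4 * b - 1) ^+ 2 / (1 - b) by rewrite /hyperb; field_lra.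
  by rewrite divr_ge0 ?sqr_ge0 //; lra.
- have -> : F3 qb = Vq by rewrite /hyperb; field_lra.
  exact: Vq_ge0.
Qed.

Lemma edge_excessE (x : R) : x != 0 -> 1 - x - Kb / x = (x - (1 - 2 * b)) * (2 * b - x) / x.
Proof. by move=> x0; field. Qed.

Lemma edge_excess_ge0 (x : R) : 1 - 2 * b <= x -> x <= 2 * b -> 0 <= 1 - x - Kb / x.
Proof.
bounds; move=> mx x2b; rewrite edge_excessE; last by lra.
by rewrite divr_ge0 ?mulr_ge0 //; lra.
Qed.

Lemma edge_excess_eq0 (x : R) : 0 < x -> 1 - x - Kb / x = 0 -> extreme b x.
Proof.
move=> x0; rewrite edge_excessE ?lt0r_neq0 // => /eqP.
rewrite mulf_eq0 invr_eq0 (negbTE (lt0r_neq0 x0)) orbF mulf_eq0 !subr_eq0.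
by rewrite /extreme; case/orP=> /eqP ->; [left | right].
Qed.

(* The bound for [D(T) = min(u, P)], [P = 2u + t - 2 + 3b].  If [u <= P] it follows from [F1]
   or [F2] since [t >= max(u, 2 - 3b - u)]; otherwise it is concave in [t] and is checked at
   [t = 2 - 3b - u] (where it is [F1 u]) and at [t = max(u, 2 - 2b - 2u)]. *)
Lemma excess_large_case (u t : R) :
  1 - 2 * b <= u -> u <= t -> u <= 1 -> b < 2 * u + t - 2 + 3 * b ->
  0 <= 1 + 2 * b - kb * (Num.min u (2 * u + t - 2 + 3 * b) - b) - Kb * (2 / u + 1 / t).
Proof.
bounds; move=> mu ut u1 bP.
have u0 : 0 < u by lra.
have t0 : 0 < t by lra.
have K0 : 0 <= Kb by nra.
have [uP|Pu] := lerP u (2 * u + t - 2 + 3 * b).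
  have [uq|qu] := lerP u qb.
    have -> : 1 + 2 * b - kb * (u - b) - Kb * (2 / u + 1 / t)
        = F1 u + (Kb / (wb - u) - Kb / t) by rewrite /hyperb; field_lra.
    by rewrite addr_ge0 ?F1_ge0 // subr_ge0 ler_wpdiv2l //; lra.
  have -> : 1 + 2 * b - kb * (u - b) - Kb * (2 / u + 1 / t)
      = F2 u + (Kb / u - Kb / t) by rewrite /hyperb; field_lra.
  by rewrite addr_ge0 ?F2_ge0 ?subr_ge0 ?ler_wpdiv2l //; lra.
pose G := hyperb (1 + 2 * b - kb * (2 * u - 2 + 2 * b) - 2 * Kb / u) (- kb) Kb 0 wb.
have -> : 1 + 2 * b - kb * (2 * u + t - 2 + 3 * b - b) - Kb * (2 / u + 1 / t) = G t.
  by rewrite /G /hyperb; field_lra.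
have G_top : 0 <= G (wb - u).
  have -> : G (wb - u) = F1 u by rewrite /G /hyperb; field_lra.
  by apply: F1_ge0; lra.
have [ulow|uhigh] := lerP u (2 - 2 * b - 2 * u).
  have G_low : 0 <= G (2 - 2 * b - 2 * u).
    have -> : G (2 - 2 * b - 2 * u)
        = 2 * (1 - u - Kb / u) + (1 - (2 - 2 * b - 2 * u) - Kb / (2 - 2 * b - 2 * u)).
      by rewrite /G /hyperb; field_lra.
    by rewrite addr_ge0 ?mulr_ge0 ?edge_excess_ge0 //; lra.
  by apply: (hyperb_ge0_between _ _ _ _ _ _ G_low G_top); lra.
have G_low : 0 <= G u.
  have -> : G u = F3 u by rewrite /G /hyperb; field_lra.
  by apply: F3_ge0; lra.
by apply: (hyperb_ge0_between _ _ _ _ _ _ G_low G_top); lra.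
Qed.

Lemma excess_double (c a s u t : R) : b / (1 - b) < c -> c <= 1 -> 0 <= s ->
  1 - 2 * b <= u -> u <= t -> u <= 1 -> a <= u -> a <= 2 * u + t - 2 + 3 * b - s ->
  0 <= triangle_excess b c a u u t /\
  (triangle_excess b c a u u t = 0 -> [/\ s = 0, extreme b u & extreme b t]).
Proof.
bounds; move=> rc c1 s0 mu ut u1 au aP.
have u0 : 0 < u by lra.
have t0 : 0 < t by lra.
have [Pb|bP] := lerP (2 * u + t - 2 + 3 * b) b.
  have ab : a <= b by lra.
  rewrite /triangle_excess (min_idPl ab).
  have -> : 1 + 3 * b + c * (a - a) - a - Kb * (1 / u + 1 / u + 1 / t)
      = s + (2 * u + t - 2 + 3 * b - s - a)
      + 2 * (1 - u - Kb / u) + (1 - t - Kb / t) by field_lra.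
  have eu := @edge_excess_ge0 u mu ltac:(lra).
  have et := @edge_excess_ge0 t ltac:(lra) ltac:(lra).
  split; first lra.
  move=> E0.
  have eu0 : 1 - u - Kb / u = 0 by lra.
  have et0 : 1 - t - Kb / t = 0 by lra.
  by split; [lra | exact: edge_excess_eq0 eu0 | exact: edge_excess_eq0 et0].
have H := excess_large_case mu ut u1 bP.
set A := Num.min u (2 * u + t - 2 + 3 * b) in H.
have aA : a <= A by rewrite le_min au /=; lra.
have bA : b < A by rewrite lt_min bP andbT; lra.
have kbE : kb = 1 - b / (1 - b) by field_lra.
rewrite kbE in H.
have r1 : 0 < 1 - b / (1 - b) by rewrite -kbE divr_gt0 //; lra.
suff E_gt0 : 0 < triangle_excess b c a u u t by split; [exact: ltW | lra].
have Ab : 0 < A - b by rewrite subr_gt0.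
rewrite /triangle_excess; have [ab|ba] := lerP a b.
  by have := mulr_gt0 r1 Ab; lra.
have : 0 <= (1 - c) * (A - a) by rewrite mulr_ge0 // subr_ge0.
have : 0 < (c - b / (1 - b)) * (A - b) by rewrite mulr_gt0 // subr_gt0.
lra.
Qed.

Lemma excess_sorted (c a s x1 x2 x3 : R) : b / (1 - b) < c -> c <= 1 -> 0 <= s ->
  1 - 2 * b <= x1 -> x1 <= x2 -> x1 <= x3 -> x1 <= 1 ->
  a <= x1 -> a <= x1 + x2 + x3 - 2 + 3 * b - s ->
  0 <= triangle_excess b c a x1 x2 x3 /\
  (triangle_excess b c a x1 x2 x3 = 0 -> [/\ s = 0, extreme b x1, extreme b x2 & extreme b x3]).
Proof.
bounds; move=> rc c1 s0 mx1 x12 x13 x11 ax1 aP.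
have x10 : 0 < x1 by lra.
have x1t : x1 <= x2 + x3 - x1 by lra.
have aP' : a <= 2 * x1 + (x2 + x3 - x1) - 2 + 3 * b - s by lra.
have [E0 Eeq] := excess_double rc c1 s0 mx1 x1t x11 ax1 aP'.
have gap0 : 0 <= (x2 - x1) * (x3 - x1) * (x2 + x3) / (x1 * (x2 + x3 - x1) * x2 * x3).
  by rewrite divr_ge0 ?mulr_ge0 //; lra.
have K0 : 0 < Kb by rewrite !mulr_gt0 //; lra.
(* By convexity of [1/x], moving [x2, x3] apart to [x1, x2 + x3 - x1] only lowers the excess. *)
have -> : triangle_excess b c a x1 x2 x3 = triangle_excess b c a x1 x1 (x2 + x3 - x1)
    + Kb * ((x2 - x1) * (x3 - x1) * (x2 + x3) / (x1 * (x2 + x3 - x1) * x2 * x3)).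
  by rewrite /triangle_excess recip_sum3E; [ring | lra ..].
have := mulr_ge0 (ltW K0) gap0.
split; first lra.
move=> E0'.
have [s_0 ext1 extt] : [/\ s = 0, extreme b x1 & extreme b (x2 + x3 - x1)] by apply: Eeq; lra.
have /eqP : Kb * ((x2 - x1) * (x3 - x1) * (x2 + x3) / (x1 * (x2 + x3 - x1) * x2 * x3)) = 0.
  by lra.
rewrite mulf_eq0 (negbTE (lt0r_neq0 K0)) /= mulf_eq0 invr_eq0.
have -> : (x1 * (x2 + x3 - x1) * x2 * x3 == 0) = false by apply/negbTE; rewrite !mulf_neq0 //; lra.
rewrite orbF !mulf_eq0 !subr_eq0 (_ : (x2 + x3 == 0) = false) ?orbF; last by apply/negbTE; lra.
case/orP=> /eqP e; split=> //.
- by rewrite e.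
- by have -> : x3 = x2 + x3 - x1 by lra.
- by have -> : x2 = x2 + x3 - x1 by lra.
- by rewrite e.
Qed.

Lemma excess_ge0 (c a s x1 x2 x3 : R) : b / (1 - b) < c -> c <= 1 -> 0 <= s ->
  1 - 2 * b <= x1 -> 1 - 2 * b <= x2 -> 1 - 2 * b <= x3 -> x1 <= 1 -> x2 <= 1 -> x3 <= 1 ->
  a <= x1 -> a <= x2 -> a <= x3 -> a <= x1 + x2 + x3 - 2 + 3 * b - s ->
  0 <= triangle_excess b c a x1 x2 x3 /\
  (triangle_excess b c a x1 x2 x3 = 0 -> [/\ s = 0, extreme b x1, extreme b x2 & extreme b x3]).
Proof.
move=> rc c1 s0.
wlog le12 : x1 x2 x3 / x1 <= x2 => [gen|].
  have [le12|/ltW le21] := lerP x1 x2; first exact: gen.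
  move=> *; rewrite triangle_excessC12.
  have [E0 Eeq] : 0 <= triangle_excess b c a x2 x1 x3 /\
      (triangle_excess b c a x2 x1 x3 = 0 -> [/\ s = 0, extreme b x2, extreme b x1 & extreme b x3]).
    by apply: gen => //; lra.
  by split=> // /Eeq [].
wlog le13 : x1 x2 x3 le12 / x1 <= x3 => [gen|].
  have [le13|/ltW le31] := lerP x1 x3; first exact: gen.
  move=> *; rewrite triangle_excessC13.
  have [E0 Eeq] : 0 <= triangle_excess b c a x3 x2 x1 /\
      (triangle_excess b c a x3 x2 x1 = 0 -> [/\ s = 0, extreme b x3, extreme b x2 & extreme b x1]).
    by apply: gen => //; lra.
  by split=> // /Eeq [].
by move=> *; apply: excess_sorted => //; lra.
Qed.

Lemma triangle_excess_ge0 (c a ya yb yc xab xac xbc : R) : b / (1 - b) < c -> c <= 1 ->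
  1 - b <= ya -> 1 - b <= yb -> 1 - b <= yc ->
  ya + yb - 1 <= xab -> ya + yc - 1 <= xac -> yb + yc - 1 <= xbc ->
  xab <= 1 -> xac <= 1 -> xbc <= 1 ->
  a <= xab -> a <= xac -> a <= xbc -> a <= xab + xac + xbc - ya - yb - yc + 1 ->
  0 <= triangle_excess b c a xab xac xbc /\
  (triangle_excess b c a xab xac xbc = 0 ->
   [/\ ya = 1 - b, yb = 1 - b, yc = 1 - b & [/\ extreme b xab, extreme b xac & extreme b xbc]]).
Proof.
bounds; move=> rc c1 ya1 yb1 yc1 *.
have [E0 Eeq] := @excess_ge0 c a (ya + yb + yc - 3 * (1 - b)) xab xac xbc rc c1
  ltac:(lra) ltac:(lra) ltac:(lra) ltac:(lra) ltac:(lra) ltac:(lra) ltac:(lra)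
  ltac:(lra) ltac:(lra) ltac:(lra) ltac:(lra).
by split=> // /Eeq [s0 ? ? ?]; split=> //; lra.
Qed.

Local Notation cb := (2 / (1 - 2 * b) * (1 - 3 * b + (4 * b - 1) / (29 - 75 * b))).

Lemma cb_gt : b / (1 - b) < cb.
Proof.
bounds; rewrite -subr_gt0.
have -> : cb - b / (1 - b)
    = (1 - 3 * b) * (200 * b ^+ 2 - 233 * b + 56) / ((1 - 2 * b) * (29 - 75 * b) * (1 - b)).
  by field_lra.
by rewrite divr_gt0 ?mulr_gt0 //; nra.
Qed.

Lemma cb_le1 : cb <= 1.
Proof.
bounds; rewrite -subr_ge0.
have -> : 1 - cb = 3 * (4 * b - 1) * (9 - 25 * b) / ((1 - 2 * b) * (29 - 75 * b)) by field_lra.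
by rewrite divr_ge0 ?mulr_ge0 //; lra.
Qed.

End Excess.

Section Density.
Variables (V : finType) (e : rel V) (R : realFieldType) (beta : R).
Hypotheses (esym : symmetric e) (eirr : irreflexive e).
Hypotheses (b_ge : 1 / 4 <= beta) (b_lt : beta < 1 / 3).
Hypothesis V_gt0 : (0 < #|V|)%N.
Hypothesis vdeg_ge : forall x, (1 - beta) * #|V|%:R <= (vdeg e x)%:R.

Local Notation n := (#|V|%:R : R).
Local Notation D := (@Dn V e R).

Lemma n_gt0 : 0 < n.
Proof. by rewrite ltr0n. Qed.

Lemma card_frac_le (A B : {set V}) : A \subset B -> #|A|%:R / n <= #|B|%:R / n.
Proof. by move=> AB; rewrite ler_pM2r ?invr_gt0 ?n_gt0 // ler_nat subset_leq_card. Qed.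

Lemma card_frac_le1 (A : {set V}) : #|A|%:R / n <= 1.
Proof. by rewrite ler_pdivrMr ?n_gt0 // mul1r ler_nat max_card. Qed.

Lemma vdeg_frac_ge x : 1 - beta <= (vdeg e x)%:R / n.
Proof. by rewrite ler_pdivlMr ?n_gt0. Qed.

Lemma Dn_edge a b : e a b -> D [set a; b] = #|nbhd e a :&: nbhd e b|%:R / n.
Proof. by move=> eab; rewrite /Dn cdeg_edge. Qed.

Lemma Dn_triangle a b c : e a b -> e a c -> e b c ->
  D [set a; b; c] = #|nbhd e a :&: nbhd e b :&: nbhd e c|%:R / n.
Proof. by move=> eab eac ebc; rewrite /Dn cdeg_triangle. Qed.

Lemma Dn_edge_le1 a b : e a b -> D [set a; b] <= 1.
Proof. by move=> eab; rewrite Dn_edge // card_frac_le1. Qed.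

Lemma Dn_edge_ge a b : e a b -> (vdeg e a)%:R / n + (vdeg e b)%:R / n - 1 <= D [set a; b].
Proof.
move=> eab; rewrite Dn_edge //.
have -> : (vdeg e a)%:R / n + (vdeg e b)%:R / n - 1 = ((vdeg e a)%:R + (vdeg e b)%:R - n) / n.
  by field; rewrite lt0r_neq0 ?n_gt0.
rewrite ler_pM2r ?invr_gt0 ?n_gt0 // lerBlDr -!natrD ler_nat.
by rewrite /nbhd -cardsUI addnC leq_add2l max_card.
Qed.

Lemma Dn_edge_gt0 E : E \in cliques e 2 -> 0 < D E.
Proof.
case/(cliques2P esym eirr) => a [b [eab ->]].
have := Dn_edge_ge eab; have := vdeg_frac_ge a; have := vdeg_frac_ge b.
have := b_lt; lra.
Qed.

Lemma edge_common_nbr x y : e x y -> exists w, e x w /\ e y w.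
Proof.
move=> exy; have : 0 < D [set x; y] by apply: Dn_edge_gt0; apply/(cliques2P esym eirr); exists x, y.
rewrite Dn_edge // pmulr_lgt0 ?invr_gt0 ?n_gt0 // ltr0n => /card_gt0P [w].
by rewrite !inE => /andP [xw yw]; exists w.
Qed.

Definition triangle_term (c : R) (T : {set V}) : R :=
  1 + 3 * beta + c * (D T - Num.min (D T) beta) - D T
  - 2 * (1 - 2 * beta) * beta * \sum_(E in cliques e 2 | E \subset T) 1 / D E.

Lemma triangle_termE c a b d : e a b -> e a d -> e b d ->
  triangle_term c [set a; b; d]
  = triangle_excess beta c (D [set a; b; d]) (D [set a; b]) (D [set a; d]) (D [set b; d]).
Proof. by move=> eab ead ebd; rewrite /triangle_term triangle_edge_sum. Qed.

Lemma Dn_triangle_le a b d : e a b -> e a d -> e b d ->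
  D [set a; b; d] <= D [set a; b] + D [set a; d] + D [set b; d]
                     - (vdeg e a)%:R / n - (vdeg e b)%:R / n - (vdeg e d)%:R / n + 1.
Proof.
move=> eab ead ebd; rewrite Dn_triangle // !Dn_edge //.
set Na := nbhd e a; set Nb := nbhd e b; set Nd := nbhd e d.
have : (#|Na :&: Nb :&: Nd| + #|Na| + #|Nb| + #|Nd|
        <= #|Na :&: Nb| + #|Na :&: Nd| + #|Nb :&: Nd| + #|V|)%N.
  by have := cards_incl_excl3 Na Nb Nd; have := max_card (Na :|: Nb :|: Nd); lia.
rewrite -(ler_nat R) !natrD => h.
have frac_sum (x y z u v w : R) :
    x / n + y / n + z / n - u / n - v / n - w / n + 1 = (x + y + z - u - v - w + n) / n.
  by field; rewrite lt0r_neq0 ?n_gt0.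
by rewrite frac_sum ler_pM2r ?invr_gt0 ?n_gt0 //; lra.
Qed.

Lemma triangle_term_ge0 c a b d : beta / (1 - beta) < c -> c <= 1 -> e a b -> e a d -> e b d ->
  0 <= triangle_term c [set a; b; d] /\
  (triangle_term c [set a; b; d] = 0 ->
   [/\ (vdeg e a)%:R = (1 - beta) * n, (vdeg e b)%:R = (1 - beta) * n,
       (vdeg e d)%:R = (1 - beta) * n &
       [/\ extreme beta (D [set a; b]), extreme beta (D [set a; d])
          & extreme beta (D [set b; d])]]).
Proof.
move=> rc c1 eab ead ebd; rewrite triangle_termE //.
have sub_ab : D [set a; b; d] <= D [set a; b].
  by rewrite Dn_triangle // Dn_edge // card_frac_le // subsetIl.
have sub_ad : D [set a; b; d] <= D [set a; d].
  by rewrite Dn_triangle // Dn_edge // card_frac_le // setIAC subsetIl.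
have sub_bd : D [set a; b; d] <= D [set b; d].
  by rewrite Dn_triangle // Dn_edge // card_frac_le // -setIA subsetIr.
have [E0 Eeq] := triangle_excess_ge0 b_ge b_lt rc c1
  (vdeg_frac_ge a) (vdeg_frac_ge b) (vdeg_frac_ge d)
  (Dn_edge_ge eab) (Dn_edge_ge ead) (Dn_edge_ge ebd)
  (Dn_edge_le1 eab) (Dn_edge_le1 ead) (Dn_edge_le1 ebd)
  sub_ab sub_ad sub_bd (Dn_triangle_le eab ead ebd).
split=> // /Eeq [ya yb yd ext]; split=> //.
all: by rewrite -[LHS](@divfK _ n) ?lt0r_neq0 ?n_gt0 // ?ya ?yb ?yd.
Qed.

Lemma triangle_terms_ge0 c : beta / (1 - beta) < c -> c <= 1 ->
  {in cliques e 3, forall T, 0 <= triangle_term c T}.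
Proof.
move=> rc c1 T /(cliques3P esym eirr) [a [b [d [eab ead ebd ->]]]].
by case: (triangle_term_ge0 rc c1 eab ead ebd).
Qed.

Lemma tight_edge c x y : beta / (1 - beta) < c -> c <= 1 ->
  {in cliques e 3, forall T, triangle_term c T = 0} -> e x y ->
  (vdeg e x)%:R = (1 - beta) * n /\ extreme beta (D [set x; y]).
Proof.
move=> rc c1 term0 exy; have [d [exd eyd]] := edge_common_nbr exy.
have [_ /(_ _)[]] := triangle_term_ge0 rc c1 exy exd eyd.
  by apply: term0; apply/(cliques3P esym eirr); exists x, y, d.
by move=> ? _ _ [].
Qed.

Lemma sum_Dn_triangles : \sum_(T in cliques e 3) D T = 4 * (kcount e 4)%:R / n.
Proof. by rewrite -mulr_suml sum_cdeg_triangles natrM. Qed.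

Lemma sum_recip_Dn_edges :
  \sum_(T in cliques e 3) \sum_(E in cliques e 2 | E \subset T) 1 / D E = n * (kcount e 2)%:R.
Proof.
rewrite (sum_subcliques e 2 (fun E => 1 / D E)) mulr_natr -sumr_const; apply: eq_bigr => E E2.
have d0 : (cdeg e E)%:R != 0 :> R.
  by apply: contraTneq (Dn_edge_gt0 E2) => d0; rewrite /Dn d0 mul0r ltxx.
by rewrite /Dn invf_div mul1r -[LHS]mulr_natr divfK.
Qed.

Lemma excess_sum c :
  (1 + 3 * beta) * (kcount e 3)%:R + c * \sum_(T in cliques e 3) Dplus e beta T
  - (2 * (1 - 2 * beta) * beta * n * (kcount e 2)%:R + 4 * (kcount e 4)%:R / n)
  = \sum_(T in cliques e 3) triangle_term c T.
Proof.
have DplusE : \sum_(T in cliques e 3) Dplus e beta T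
    = \sum_(T in cliques e 3) (D T - Num.min (D T) beta).
  apply: eq_bigr => T; rewrite inE => /andP [_ /eqP T3].
  by rewrite /Dplus /Dminus T3 mul1r.
rewrite DplusE /triangle_term !sumrB big_split /= sumr_const -!mulr_sumr sumrB.
rewrite sum_Dn_triangles sum_recip_Dn_edges mulr_natr.
ring.
Qed.

End Density.

Theorem mainTheorem15 (R : realFieldType) (V : finType) (e : rel V) (beta : R) :
  symmetric e -> irreflexive e ->
  1 / 4 <= beta -> beta < 1 / 3 ->
  (forall x : V, (1 - beta) * #|V|%:R <= (vdeg e x)%:R) ->
  (exists x : V, (vdeg e x)%:R = (1 - beta) * #|V|%:R) ->
  let n : R := #|V|%:R in
  let lhs : R :=
    (1 + 3 * beta) * (kcount e 3)%:R
    + 2 / (1 - 2 * beta) * (1 - 3 * beta + (4 * beta - 1) / (29 - 75 * beta))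
      * \sum_(T in cliques e 3) Dplus e beta T in
  let rhs : R :=
    2 * (1 - 2 * beta) * beta * n * (kcount e 2)%:R + 4 * (kcount e 4)%:R / n in
  rhs <= lhs /\
  (lhs = rhs ->
     (forall x : V, (vdeg e x)%:R = (1 - beta) * n) /\
     (forall E, E \in cliques e 2 -> @Dn V e R E = 1 - 2 * beta \/ @Dn V e R E = 2 * beta)).
Proof.
move=> esym eirr b_ge b_lt vdeg_ge [x0 _] n lhs rhs.
have V_gt0 : (0 < #|V|)%N by apply/card_gt0P; exists x0.
pose c : R := 2 / (1 - 2 * beta) * (1 - 3 * beta + (4 * beta - 1) / (29 - 75 * beta)).
have [rc c1] := (cb_gt b_ge b_lt, cb_le1 b_ge b_lt).
have term_ge0 := triangle_terms_ge0 esym eirr b_ge b_lt V_gt0 vdeg_ge rc c1.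
have sum_eq := excess_sum esym eirr b_lt V_gt0 vdeg_ge c.
split; first by rewrite -subr_ge0 sum_eq sumr_ge0.
move=> /eqP; rewrite -subr_eq0 sum_eq => /eqP /(psumr_eq0P term_ge0) term0.
have tight := tight_edge esym eirr b_ge b_lt V_gt0 vdeg_ge rc c1 term0.
split=> [x | E /(cliques2P esym eirr) [x [y [exy ->]]]]; last exact: (tight _ _ exy).2.
have /card_gt0P [y] : (0 < vdeg e x)%N.
  by rewrite -(ltr0n R); apply: lt_le_trans (vdeg_ge x); rewrite mulr_gt0 ?ltr0n //; lra.
by rewrite inE => /tight [].
Qed.
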